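(* Consider the Unbiased Space Saving sketch with $m$ bins run on an arbitrary (deterministic) stream of rows $x_1, x_2, \ldots$, each row being an item label. For any item $x$ and any time $t$, the estimate $\hat{N}_x(t)$ is an unbiased estimate of the true count $n_x(t)$, i.e. $\mathbb{E}\,\hat{N}_x(t) = n_x(t)$.
   Context: Unbiased Space Saving sketch with $m$ bins: maintain a list of $m$ (item, count) pairs, all counts initialized to $0$ (initially unlabeled). For each new row with item $x_{new}$: if $x_{new}$ is the label of some pair, increment that pair's count by $1$. Otherwise, find the pair $(x_{min}, \hat{N}_{min})$ with the smallest count, increment its count by $1$, and with probability $1/(\hat{N}_{min}+1)$ (independently of everything else) replace its label by $x_{new}$. After $t$ rows, $\hat{N}_x(t)$ is the count of the pair labeled $x$ if $x$ is a label, and $0$ otherwise; $n_x(t)$ is the number of occurrences of $x$ among the first $t$ rows. *)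

(* Discrete probability over the finitely many coin-flip
   outcomes is represented as a finitely supported weighted list of states. *)
From mathcomp Require Import all_boot all_order all_algebra.
Set Implicit Arguments. Unset Strict Implicit. Unset Printing Implicit Defensive.
Import Order.TTheory GRing.Theory Num.Theory.
Local Open Scope ring_scope.

(* A sketch state: m (label, count) pairs; label None = unlabeled. *)
Definition uss_state (T : eqType) (m : nat) := {ffun 'I_m -> option T * nat}.

Definition uss_init (T : eqType) (m : nat) : uss_state T m :=
  [ffun => (None, 0%N)].

Definition uss_upd (T : eqType) m (st : uss_state T m) (i : 'I_m)
  (v : option T * nat) : uss_state T m :=
  [ffun j => if j == i then v else st j].

Definition dist (R : Type) (A : Type) := seq (R * A).

Definition dist_bind (R : ringType) (A B : Type) (d : dist R A)
  (f : A -> dist R B) : dist R B :=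
  flatten [seq [seq (p.1 * q.1, q.2) | q <- f p.2] | p <- d].

(* One update step of Unbiased Space Saving with new row x.
   [choose st] selects the bin used as "the pair with smallest count"
   (tie-breaking rule; required below to return a minimal-count bin). *)
Definition uss_step (R : realFieldType) (T : eqType) m
  (choose : uss_state T m -> 'I_m) (x : T) (st : uss_state T m)
  : dist R (uss_state T m) :=
  match [pick i | (st i).1 == Some x] with
  | Some i => [:: (1, uss_upd st i ((st i).1, (st i).2.+1))]
  | None =>
      let i := choose st in
      let c := (st i).2 in
      [:: ((c.+1%:R)^-1, uss_upd st i (Some x, c.+1));
          (1 - (c.+1%:R)^-1, uss_upd st i ((st i).1, c.+1))]
  end.

Fixpoint uss_run (R : realFieldType) (T : eqType) m
  (choose : uss_state T m -> 'I_m) (xs : nat -> T) (t : nat)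
  : dist R (uss_state T m) :=
  match t with
  | 0 => [:: (1, uss_init T m)]
  | t'.+1 => dist_bind (uss_run R choose xs t') (uss_step R choose (xs t'))
  end.

Definition uss_est (T : eqType) m (st : uss_state T m) (x : T) : nat :=
  match [pick i | (st i).1 == Some x] with
  | Some i => (st i).2
  | None => 0%N
  end.

Definition expect (R : ringType) A (d : dist R A) (f : A -> R) : R :=
  \sum_(p <- d) p.1 * f p.2.

Definition true_count (T : eqType) (xs : nat -> T) (x : T) (t : nat) : nat :=
  count (pred1 x) [seq xs i | i <- iota 0 t].

(* While the labels of the bins are pairwise distinct, \hat N_x is the sum over
   the bins of their count if they are labelled x, and 0 otherwise.  A step
   touches one bin i, of count c.  If x_new labels a bin, that bin's count grows
   by 1.  Otherwise bin i gets count c+1, and its label becomes x_new with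
   probability 1/(c+1), so its expected contribution becomes
   [x_new = x] + (1 - 1/(c+1)) (c+1) [label_i = x] = [x_new = x] + c [label_i = x].
   Either way the expected estimate grows by exactly [x_new = x].  Labels stay
   distinct because a new label is only introduced when it is absent. *)

From mathcomp Require Import all_boot all_order all_algebra ring.
Import Order.TTheory GRing.Theory Num.Theory.
Local Open Scope ring_scope.
Set Implicit Arguments. Unset Strict Implicit. Unset Printing Implicit Defensive.

Section Dist.
Variable R : nzRingType.

Lemma expect_bind (A B : Type) (d : dist R A) (f : A -> dist R B) g :
  expect (dist_bind d f) g = \sum_(p <- d) p.1 * expect (f p.2) g.
Proof.
rewrite /expect /dist_bind big_flatten /= big_map; apply: eq_bigr => p _.
by rewrite big_map big_distrr /=; apply: eq_bigr => q _; rewrite mulrA.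
Qed.

Lemma expect_bind_affine (A B : Type) (d : dist R A) (f : A -> dist R B) g h c :
  (forall a, expect (f a) g = h a + c) ->
  expect (dist_bind d f) g = expect d h + expect d (fun _ => 1) * c.
Proof.
move=> fE; rewrite expect_bind /expect big_distrl -big_split.
by apply: eq_bigr => p _; rewrite -/(expect _ _) fE mulr1 mulrDr.
Qed.

Lemma eq_expect_in (A : eqType) (d : dist R A) (f g : A -> R) :
  {in map snd d, f =1 g} -> expect d f = expect d g.
Proof. by move=> efg; apply: eq_big_seq => p dp; rewrite efg ?map_f. Qed.

Lemma mem_dist_bind (A B : eqType) (d : dist R A) (f : A -> dist R B) b :
  b \in map snd (dist_bind d f) -> exists2 a, a \in map snd d & b \in map snd (f a).
Proof.
case/mapP=> q /flattenP[_ /mapP[p dp ->] /mapP[r fr ->]] ->.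
by exists p.2; [apply: map_f | apply: (map_f snd fr)].
Qed.

End Dist.

Lemma true_countS (T : eqType) (xs : nat -> T) x t :
  true_count xs x t.+1 = (true_count xs x t + (xs t == x))%N.
Proof. by rewrite /true_count -addn1 iotaD map_cat count_cat /= addn0 eq_sym. Qed.

Section Sketch.
Variables (T : eqType) (m : nat).
Implicit Types (st : uss_state T m) (x : T).

Definition uniq_labels st :=
  forall i j y, (st i).1 = Some y -> (st j).1 = Some y -> i = j.

Definition bin_count x (b : option T * nat) : nat :=
  if b.1 == Some x then b.2 else 0.

Lemma uss_estE st x : uniq_labels st -> uss_est st x = (\sum_i bin_count x (st i))%N.
Proof.
move=> uniq_st; rewrite /uss_est /bin_count -big_mkcond /=.
case: pickP => [k /eqP stk | nox]; last by rewrite big_pred0.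
rewrite (big_pred1 k) // => j /=.
by apply/eqP/eqP => [/uniq_st/(_ stk) | ->].
Qed.

Lemma uniq_labels_upd st i v :
  uniq_labels st -> (forall j y, j != i -> v.1 = Some y -> (st j).1 != Some y) ->
  uniq_labels (uss_upd st i v).
Proof.
move=> uniq_st fresh a b y; rewrite !ffunE.
case: eqVneq => [-> | ai]; case: eqVneq => [-> | bi] // va vb.
- by move: (fresh b y bi va); rewrite vb eqxx.
- by move: (fresh a y ai vb); rewrite va eqxx.
- exact: uniq_st va vb.
Qed.

Lemma uniq_labels_bump st i n :
  uniq_labels st -> uniq_labels (uss_upd st i ((st i).1, n)).
Proof.
move=> uniq_st; apply: uniq_labels_upd => // j y ji /= sti.
by apply/eqP => /uniq_st/(_ sti) ij; rewrite ij eqxx in ji.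
Qed.

Lemma sum_uss_upd (V : zmodType) (F : option T * nat -> V) st i v :
  \sum_j F (uss_upd st i v j) = \sum_j F (st j) + (F v - F (st i)).
Proof.
rewrite (bigD1 i) //= [in RHS](bigD1 i) //= ffunE eqxx.
rewrite (eq_bigr (fun j => F (st j))) => [|j /negbTE ji]; last by rewrite ffunE ji.
by rewrite [RHS]addrC addrA subrK.
Qed.

Section Run.
Variables (R : realFieldType) (choose : uss_state T m -> 'I_m).

Lemma uss_step_uniq_labels xn st :
  uniq_labels st -> {in map snd (uss_step R choose xn st), forall s, uniq_labels s}.
Proof.
move=> uniq_st s; rewrite /uss_step; case: pickP => [i _ | noxn] /=.
  by rewrite inE => /eqP ->; apply: uniq_labels_bump.
rewrite !inE => /orP[] /eqP ->; last exact: uniq_labels_bump.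
by apply: uniq_labels_upd => // j y _ [<-]; rewrite noxn.
Qed.

Lemma expect_uss_step1 xn st : expect (uss_step R choose xn st) (fun _ => 1) = 1.
Proof.
rewrite /uss_step /expect; case: pickP => [i _ | _] /=; first by rewrite big_seq1 mulr1.
by rewrite !big_cons big_nil !mulr1 addr0 addrC subrK.
Qed.

Lemma expect_uss_step_bin_count xn x st :
  expect (uss_step R choose xn st) (fun s => (\sum_j bin_count x (s j))%:R)
  = (\sum_j bin_count x (st j))%:R + (xn == x)%:R.
Proof.
pose F b : R := (bin_count x b)%:R.
have sumF s : (\sum_j bin_count x (s j))%:R = \sum_j F (s j) by rewrite natr_sum.
rewrite /expect sumF; under eq_bigr do rewrite sumF.
rewrite /uss_step; case: pickP => [i /eqP sti | noxn] /=.
  rewrite big_seq1 mul1r sum_uss_upd /F /bin_count /= sti.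
  congr (_ + _); rewrite (inj_eq Some_inj); case: (xn == x); last by rewrite subrr.
  by rewrite -natrB // subSnn.
set i := choose st; set c := (st i).2; set p := (c.+1%:R : R)^-1.
have pa : p * F (Some xn, c.+1) = (xn == x)%:R.
  rewrite /F /bin_count (inj_eq Some_inj); case: (xn == x); last by rewrite mulr0.
  by rewrite mulVf // pnatr_eq0.
have pb : (1 - p) * F ((st i).1, c.+1) = F (st i).
  rewrite /F /bin_count /=; case: ifP => _; last by rewrite mulr0.
  by rewrite mulrBl mul1r mulVf ?pnatr_eq0 // -addn1 natrD addrK.
by rewrite !big_cons big_nil addr0 !sum_uss_upd -pa -pb /=; ring.
Qed.

Variable xs : nat -> T.

Lemma uss_run_uniq_labels t :
  {in map snd (uss_run R choose xs t), forall st, uniq_labels st}.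
Proof.
elim: t => [|t IH] st /=; first by rewrite inE => /eqP -> i j y; rewrite ffunE.
by case/mem_dist_bind=> s /IH /uss_step_uniq_labels; apply.
Qed.

Lemma expect_uss_run1 t : expect (uss_run R choose xs t) (fun _ => 1) = 1.
Proof.
elim: t => [|t IH] /=; first by rewrite /expect big_seq1 mulr1.
by rewrite expect_bind -[RHS]IH; apply: eq_bigr => p _; rewrite expect_uss_step1.
Qed.

Lemma expect_uss_run_bin_count x t :
  expect (uss_run R choose xs t) (fun st => (\sum_j bin_count x (st j))%:R)
  = (true_count xs x t)%:R.
Proof.
elim: t => [|t IH] /=.
  by rewrite /expect big_seq1 mul1r big1 // => j _; rewrite ffunE.
rewrite (expect_bind_affine _ (expect_uss_step_bin_count _ x)) IH expect_uss_run1.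
by rewrite mul1r true_countS natrD.
Qed.

End Run.

End Sketch.

Theorem theorem1 (R : realFieldType) (T : eqType) (m : nat) (hm : (0 < m)%N)
  (choose : uss_state T m -> 'I_m)
  (hchoose : forall (st : uss_state T m) (j : 'I_m),
      ((st (choose st)).2 <= (st j).2)%N)
  (xs : nat -> T) (x : T) (t : nat) :
  expect (uss_run R choose xs t) (fun st => (uss_est st x)%:R)
  = (true_count xs x t)%:R.
Proof.
rewrite -(expect_uss_run_bin_count R choose xs x t).
apply: eq_expect_in => st /uss_run_uniq_labels uniq_st.
by rewrite uss_estE.
Qed.
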